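(* For every positive integer $n$, there exists a semigroup $S$ with a left ideal $A$ such that $\mathrm{H}_{\mathcal{R}}(S)=n$ and $\mathrm{H}_{\mathcal{R}}(A)=2n$.
   Context: A left ideal of $S$ is a non-empty subset $A$ with $SA\subseteq A$. Green's preorder on a semigroup $M$: $u\leq_{\mathcal{R}} v$ iff $uM^1\subseteq vM^1$, where $M^1$ is $M$ with an identity adjoined if necessary; $\mathcal{R}$ is the associated equivalence; the $\mathcal{R}$-height $\mathrm{H}_{\mathcal{R}}(M)$ is the supremum of the cardinalities of chains in the poset of $\mathcal{R}$-classes. $\mathrm{H}_{\mathcal{R}}(A)$ is computed in $A$ as a semigroup. *)

From Stdlib Require Import List Arith.
Import ListNotations.
Set Implicit Arguments.

Section Semigroups.
Variable T : Type.
Variable mul : T -> T -> T.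

Definition associative_op : Prop :=
  forall x y z, mul x (mul y z) = mul (mul x y) z.

Definition left_ideal (A : T -> Prop) : Prop :=
  (exists a, A a) /\ forall s a, A a -> A (mul s a).

(* The subsemigroup with carrier P (P closed under mul), and the set
   x P^1 = {x} ∪ {x m | m ∈ P}, computed inside that subsemigroup. *)
Definition right_principal (P : T -> Prop) (x : T) (z : T) : Prop :=
  z = x \/ exists m, P m /\ z = mul x m.

Definition leR (P : T -> Prop) (u v : T) : Prop :=
  forall z, right_principal P u z -> right_principal P v z.

Definition ltR (P : T -> Prop) (u v : T) : Prop :=
  leR P u v /\ ~ leR P v u.

Fixpoint R_chain (P : T -> Prop) (l : list T) : Prop :=
  match l with
  | x :: ((y :: _) as t) => ltR P y x /\ R_chain P t
  | _ => True
  end.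

Definition R_height (P : T -> Prop) (n : nat) : Prop :=
  (exists l, length l = n /\ Forall P l /\ R_chain P l) /\
  (forall l, Forall P l -> R_chain P l -> length l <= n).
End Semigroups.

From Stdlib Require Import List Arith Bool Lia FinFun Wf_nat.
From Stdlib Require Import ClassicalEpsilon ProofIrrelevance FunctionalExtensionality.
Import ListNotations.

(* Let M be the Baer-Levi semigroup of injections of N with infinite co-range. It is right
   simple, and the maps with even range form a left ideal L containing the doubling map b, with
   b not in M L. Let S be (M^1)^n without its identity. By right simplicity, u <=_R v in S iff
   the support of v is contained in that of u, so R-chains of S strictly enlarge the support:
   H_R(S) = n. The tuples with a coordinate in L form a left ideal A of S. In A a strict step may
   keep the support, e.g. (b, ..., b) >_R (b b, ..., b b) because b is not in M L, but two such
   steps never follow each other; hence H_R(A) = 2n, attained by alternating b and b b on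
   growing supports. *)

Section GreenOrder.
Context {T : Type} {mul : T -> T -> T} {P : T -> Prop}.

Lemma leR_refl u : leR mul P u u.
Proof. intros z Hz; exact Hz. Qed.

Lemma leR_cases u v : leR mul P u v -> u = v \/ exists m, P m /\ u = mul v m.
Proof. intros H; apply H; left; reflexivity. Qed.

Lemma leR_mulr v s :
  associative_op mul -> (forall a c, P a -> P c -> P (mul a c)) -> P s ->
  leR mul P (mul v s) v.
Proof.
  intros Hassoc HP Ps z [-> | [m [Pm ->]]]; right.
  - exists s; auto.
  - exists (mul s m); split; auto.
Qed.

Lemma R_chain_map_seq (f : nat -> T) k : forall a,
  (forall i, a <= i -> S i < a + k -> ltR mul P (f (S i)) (f i)) ->
  R_chain mul P (map f (seq a k)).
Proof.
  induction k as [|k IH]; intros a Hstep; [exact I|].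
  destruct k as [|k]; [exact I|].
  split.
  - apply Hstep; lia.
  - apply (IH (S a)); intros i Hi Hik; apply Hstep; lia.
Qed.

Lemma R_chain_length_strict (mu : T -> nat) (N : nat) :
  (forall x y, ltR mul P y x -> mu x < mu y) -> (forall x, mu x <= N) ->
  forall l x, R_chain mul P (x :: l) -> length (x :: l) + mu x <= N + 1.
Proof.
  intros Hstep Hbound l; induction l as [|y l IH]; intros x Hc.
  - specialize (Hbound x); simpl; lia.
  - destruct Hc as [Hyx Hc].
    specialize (IH y Hc); specialize (Hstep _ _ Hyx); simpl in *; lia.
Qed.

Lemma R_chain_length_two_step (mu : T -> nat) (N : nat) :
  (forall x y, ltR mul P y x -> mu x <= mu y) ->
  (forall x y z, ltR mul P y x -> ltR mul P z y -> mu x = mu y -> mu y < mu z) ->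
  (forall x, mu x <= N) ->
  forall l x, R_chain mul P (x :: l) -> length (x :: l) + 2 * mu x <= 2 * N + 2.
Proof.
  intros Hmono Hflat Hbound l.
  induction l as [l IH] using (well_founded_induction (well_founded_ltof _ (@length T))).
  unfold ltof in IH; intros x Hc.
  destruct l as [|y l]; [specialize (Hbound x); simpl; lia|].
  destruct Hc as [Hyx Hc].
  destruct (Nat.eq_dec (mu x) (mu y)) as [Hxy | Hxy].
  - destruct l as [|z l]; [specialize (Hbound y); simpl; lia|].
    destruct Hc as [Hzy Hc].
    pose proof (Hflat _ _ _ Hyx Hzy Hxy).
    pose proof (IH l ltac:(simpl; lia) z Hc); simpl in *; lia.
  - pose proof (Hmono _ _ Hyx).
    pose proof (IH l ltac:(simpl; lia) y Hc); simpl in *; lia.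
Qed.

End GreenOrder.

Fixpoint count_below (p : nat -> bool) (m : nat) : nat :=
  match m with
  | 0 => 0
  | S m' => count_below p m' + (if p m' then 1 else 0)
  end.

Section CountBelow.
Variables p q : nat -> bool.

Lemma count_below_le_n m : count_below p m <= m.
Proof. induction m; simpl; [|destruct (p m)]; lia. Qed.

Lemma count_below_pos m k : k < m -> p k = true -> 0 < count_below p m.
Proof.
  induction m as [|m IH]; intros Hk Hp; simpl; [lia|].
  destruct (Nat.eq_dec k m) as [-> | Hne]; [rewrite Hp; lia|].
  specialize (IH ltac:(lia) Hp); lia.
Qed.

Hypothesis p_sub_q : forall k, p k = true -> q k = true.

Lemma count_below_mono m : count_below p m <= count_below q m.
Proof.
  induction m as [|m IH]; simpl; [lia|].
  specialize (p_sub_q m); destruct (p m), (q m); lia.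
Qed.

Lemma count_below_eq_sub m :
  count_below p m = count_below q m -> forall k, k < m -> q k = true -> p k = true.
Proof.
  induction m as [|m IH]; intros Hc k Hk Hq; simpl in Hc; [lia|].
  pose proof (count_below_mono m) as Hle.
  specialize (p_sub_q m).
  destruct (Nat.eq_dec k m) as [-> | Hne].
  - destruct (p m); [reflexivity|]. rewrite Hq in Hc; lia.
  - apply IH; [|lia|exact Hq].
    destruct (p m), (q m); lia.
Qed.

End CountBelow.

Section PartialTuples.
Variables (M : Type) (mul : M -> M -> M).
Hypothesis mul_assoc : associative_op mul.

(* [None] is the identity adjoined to [M]. *)
Definition mul1 (o1 o2 : option M) : option M :=
  match o1, o2 with
  | Some a, Some c => Some (mul a c)
  | Some a, None => Some a
  | None, o => o
  end.

Lemma mul1_assoc : associative_op mul1.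
Proof. intros [a|] [c|] [d|]; simpl; try rewrite mul_assoc; reflexivity. Qed.

Variable n : nat.

(* The semigroup (M^1)^n minus its identity, coordinates indexed by [k < n]. *)
Definition ptuple : Type :=
  {x : nat -> option M | (forall k, n <= k -> x k = None) /\ exists k, x k <> None}.

Definition coord (x : ptuple) : nat -> option M := proj1_sig x.

Lemma coord_out (x : ptuple) k : n <= k -> coord x k = None.
Proof. exact (proj1 (proj2_sig x) k). Qed.

Lemma coord_nonempty (x : ptuple) : exists k, coord x k <> None.
Proof. exact (proj2 (proj2_sig x)). Qed.

Lemma ptuple_ext (x y : ptuple) : (forall k, coord x k = coord y k) -> x = y.
Proof.
  destruct x as [f Hf], y as [g Hg]; unfold coord; simpl; intros H.
  assert (f = g) as <- by (apply functional_extensionality; exact H).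
  f_equal; apply proof_irrelevance.
Qed.

Definition tmul (x y : ptuple) : ptuple.
Proof.
  exists (fun k => mul1 (coord x k) (coord y k)); split.
  - intros k Hk; rewrite (coord_out x _ Hk), (coord_out y _ Hk); reflexivity.
  - destruct (coord_nonempty x) as [k Hk]; exists k.
    destruct (coord x k); [destruct (coord y k)|]; easy.
Defined.

Lemma coord_tmul x y k : coord (tmul x y) k = mul1 (coord x k) (coord y k).
Proof. reflexivity. Qed.

Lemma tmul_assoc : associative_op tmul.
Proof. intros x y z; apply ptuple_ext; intros k; rewrite !coord_tmul; apply mul1_assoc. Qed.

Definition defined (o : option M) : bool := if o then true else false.

Definition supp_incl (x y : ptuple) : Prop :=
  forall k, defined (coord x k) = true -> defined (coord y k) = true.

Definition supp_size (x : ptuple) : nat := count_below (fun k => defined (coord x k)) n.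

Lemma supp_size_pos x : 0 < supp_size x.
Proof.
  destruct (coord_nonempty x) as [k Hk].
  apply (count_below_pos _ _ k).
  - destruct (Nat.lt_ge_cases k n) as [|Hkn]; [assumption|].
    now rewrite (coord_out x _ Hkn) in Hk.
  - now destruct (coord x k).
Qed.

Lemma supp_size_le_n x : supp_size x <= n.
Proof. apply count_below_le_n. Qed.

Lemma supp_size_mono x y : supp_incl x y -> supp_size x <= supp_size y.
Proof. intros Hxy; apply count_below_mono, Hxy. Qed.

Lemma supp_size_eq_incl x y :
  supp_incl x y -> supp_size x = supp_size y -> supp_incl y x.
Proof.
  intros Hxy Hsize k Hk.
  destruct (Nat.lt_ge_cases k n) as [Hkn | Hkn].
  - exact (count_below_eq_sub _ _ Hxy n Hsize k Hkn Hk).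
  - now rewrite (coord_out y _ Hkn) in Hk.
Qed.

Lemma leR_supp_incl (P : ptuple -> Prop) u v : leR tmul P u v -> supp_incl v u.
Proof.
  intros H k Hk; destruct (leR_cases _ _ H) as [-> | [m [_ ->]]]; [exact Hk|].
  rewrite coord_tmul; destruct (coord v k); [destruct (coord m k)|]; easy.
Qed.

Lemma tmul_factor (x y : ptuple) (g : nat -> M -> M) :
  (forall j a, coord y j = Some a -> coord x j = Some (mul a (g j a))) ->
  exists s, x = tmul y s /\
    forall j, coord s j = match coord y j with Some a => Some (g j a) | None => coord x j end.
Proof.
  intros Hg.
  set (f j := match coord y j with Some a => Some (g j a) | None => coord x j end).
  assert (Hf : (forall k, n <= k -> f k = None) /\ exists k, f k <> None).
  { split.
    - intros k Hk; unfold f; rewrite (coord_out y _ Hk); exact (coord_out x _ Hk).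
    - destruct (coord_nonempty x) as [k Hk]; exists k; unfold f.
      destruct (coord y k); easy. }
  exists (exist _ f Hf); split; [|reflexivity].
  apply ptuple_ext; intros j; rewrite coord_tmul; unfold coord at 3; simpl; unfold f.
  destruct (coord y j) as [a|] eqn:Ey; [exact (Hg j a Ey) | reflexivity].
Qed.

Hypothesis right_simple : forall a c, exists h, mul a h = c.

Definition rdiv (a c : M) : M :=
  proj1_sig (constructive_indefinite_description _ (right_simple a c)).

Lemma mul_rdiv a c : mul a (rdiv a c) = c.
Proof. exact (proj2_sig (constructive_indefinite_description _ (right_simple a c))). Qed.

Definition quot (x : ptuple) (j : nat) (a : M) : M :=
  match coord x j with Some c => rdiv a c | None => a end.

Lemma quot_spec x y j a :
  supp_incl y x -> coord y j = Some a -> coord x j = Some (mul a (quot x j a)).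
Proof.
  intros Hyx Hy; specialize (Hyx j); rewrite Hy in Hyx; unfold quot.
  destruct (coord x j); [now rewrite mul_rdiv | discriminate (Hyx eq_refl)].
Qed.

Lemma leR_full_iff x y : leR tmul (fun _ => True) x y <-> supp_incl y x.
Proof.
  split; [apply leR_supp_incl|intros Hyx].
  destruct (tmul_factor x y (quot x) (fun j a => quot_spec x y j a Hyx)) as [s [-> _]].
  apply leR_mulr; auto using tmul_assoc.
Qed.

Lemma ltR_full_supp_size x y : ltR tmul (fun _ => True) y x -> supp_size x < supp_size y.
Proof.
  intros [Hyx Hxy]; apply leR_supp_incl in Hyx.
  pose proof (supp_size_mono _ _ Hyx) as Hle.
  destruct (Nat.eq_dec (supp_size x) (supp_size y)) as [Heq|]; [|lia].
  exfalso; apply Hxy, leR_full_iff, supp_size_eq_incl; assumption.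
Qed.

Variables (L : M -> Prop) (b : M).
Hypothesis L_left_ideal : forall s a, L a -> L (mul s a).
Hypothesis b_in_L : L b.
Hypothesis b_notin_ML : forall s a, L a -> mul s a <> b.

Definition meets_L (x : ptuple) : Prop := exists k a, coord x k = Some a /\ L a.

Lemma meets_L_left_ideal s x : meets_L x -> meets_L (tmul s x).
Proof.
  intros [k [a [Hk Ha]]]; exists k; rewrite coord_tmul, Hk.
  destruct (coord s k) as [c|].
  - exists (mul c a); split; [reflexivity | apply L_left_ideal, Ha].
  - exists a; split; [reflexivity | exact Ha].
Qed.

Lemma meets_L_mul x y : meets_L x -> meets_L y -> meets_L (tmul x y).
Proof. intros _; apply meets_L_left_ideal. Qed.

Lemma leR_meets_L_factor x y s : meets_L s -> x = tmul y s -> leR tmul meets_L x y.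
Proof. intros Hs ->; exact (leR_mulr y s tmul_assoc meets_L_mul Hs). Qed.

(* If [y = x a] with [a] meeting [L] at [k], the factor of [y] by [z] can be taken in [L] at [k],
   which gives [y <=_R z] in [meets_L]. *)
Lemma ltR_meets_L_flat x y z :
  ltR tmul meets_L y x -> ltR tmul meets_L z y -> supp_size x = supp_size y ->
  supp_size y < supp_size z.
Proof.
  intros [Hyx Hxy] [Hzy Hyz] Hsxy.
  pose proof (leR_supp_incl _ _ _ Hyx) as Ixy.
  pose proof (leR_supp_incl _ _ _ Hzy) as Iyz.
  pose proof (supp_size_mono _ _ Iyz).
  destruct (Nat.eq_dec (supp_size y) (supp_size z)) as [Hsyz|]; [exfalso|lia].
  pose proof (supp_size_eq_incl _ _ Ixy Hsxy) as Iyx.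
  pose proof (supp_size_eq_incl _ _ Iyz Hsyz) as Izy.
  destruct (leR_cases _ _ Hyx) as [-> | [a [[k [a' [Hak Ha']]] ->]]];
    [exact (Hxy (leR_refl _))|].
  destruct (coord x k) as [x'|] eqn:Hxk.
  2: { specialize (Iyx k); rewrite coord_tmul, Hxk, Hak in Iyx; discriminate (Iyx eq_refl). }
  assert (Hyk : coord (tmul x a) k = Some (mul x' a'))
    by (rewrite coord_tmul, Hxk, Hak; reflexivity).
  destruct (coord z k) as [z'|] eqn:Hzk.
  2: { specialize (Iyz k); rewrite Hyk, Hzk in Iyz; discriminate (Iyz eq_refl). }
  set (g j c := if j =? k then mul (rdiv z' x') a' else quot (tmul x a) j c).
  assert (Hg : forall j c, coord z j = Some c -> coord (tmul x a) j = Some (mul c (g j c))).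
  { intros j c Hc; unfold g; destruct (Nat.eqb_spec j k) as [-> | _].
    - rewrite Hzk in Hc; injection Hc as <-.
      rewrite Hyk, mul_assoc, mul_rdiv; reflexivity.
    - exact (quot_spec _ _ j c Izy Hc). }
  destruct (tmul_factor _ _ g Hg) as [s [Hs Hsk]].
  apply Hyz, (leR_meets_L_factor _ _ s); [|exact Hs].
  exists k, (g k z'); split.
  - rewrite Hsk, Hzk; reflexivity.
  - unfold g; rewrite Nat.eqb_refl; apply L_left_ideal, Ha'.
Qed.

Lemma R_chain_full_length l x :
  R_chain tmul (fun _ => True) (x :: l) -> length (x :: l) <= n.
Proof.
  intros Hc.
  pose proof (R_chain_length_strict supp_size n ltR_full_supp_size supp_size_le_n l x Hc).
  pose proof (supp_size_pos x); lia.
Qed.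

Lemma R_chain_meets_L_length l x :
  R_chain tmul meets_L (x :: l) -> length (x :: l) <= 2 * n.
Proof.
  intros Hc.
  assert (Hmono : forall x y, ltR tmul meets_L y x -> supp_size x <= supp_size y).
  { intros x0 y0 [Hyx _]; exact (supp_size_mono _ _ (leR_supp_incl _ _ _ Hyx)). }
  pose proof (R_chain_length_two_step supp_size n Hmono ltR_meets_L_flat supp_size_le_n l x Hc).
  pose proof (supp_size_pos x); lia.
Qed.

Hypothesis n_pos : 0 < n.

Definition block (p : nat) (c : M) : ptuple.
Proof.
  exists (fun k => if (k <=? p) && (k <? n) then Some c else None); split.
  - intros k Hk; destruct (Nat.ltb_spec k n); [lia|]; rewrite andb_false_r; reflexivity.
  - exists 0; destruct (Nat.ltb_spec 0 n); [discriminate | lia].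
Defined.

Lemma coord_block p c k :
  coord (block p c) k = if (k <=? p) && (k <? n) then Some c else None.
Proof. reflexivity. Qed.

Lemma coord_block_in p c k : k <= p -> k < n -> coord (block p c) k = Some c.
Proof.
  intros Hkp Hkn; rewrite coord_block.
  destruct (Nat.leb_spec k p), (Nat.ltb_spec k n); (reflexivity || lia).
Qed.

Lemma coord_block_out p c k : p < k -> coord (block p c) k = None.
Proof.
  intros Hpk; rewrite coord_block.
  destruct (Nat.leb_spec k p); [lia|reflexivity].
Qed.

Lemma block_meets_L p c : L c -> meets_L (block p c).
Proof. intros Hc; exists 0, c; split; [apply coord_block_in; lia | exact Hc]. Qed.

Lemma not_supp_incl_block p c d :
  S p < n -> ~ supp_incl (block (S p) c) (block p d).
Proof.
  intros Hp Hincl; specialize (Hincl (S p)).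
  rewrite coord_block_in, coord_block_out in Hincl by lia.
  discriminate (Hincl eq_refl).
Qed.

Lemma ltR_block_full p : S p < n ->
  ltR tmul (fun _ => True) (block (S p) b) (block p b).
Proof.
  intros Hp; split.
  - apply leR_full_iff; intros k Hk.
    rewrite coord_block in Hk |- *.
    destruct (Nat.leb_spec k p), (Nat.leb_spec k (S p)); simpl in *; (assumption || lia).
  - intros Hle; apply leR_full_iff in Hle; exact (not_supp_incl_block p b b Hp Hle).
Qed.

Lemma ltR_block_sq p : ltR tmul meets_L (block p (mul b b)) (block p b).
Proof.
  split.
  - assert (Hg : forall j a, coord (block p b) j = Some a ->
                 coord (block p (mul b b)) j = Some (mul a b)).
    { intros j a; rewrite !coord_block; destruct (_ && _); [|discriminate].
      intros Ha; injection Ha as <-; reflexivity. }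
    destruct (tmul_factor _ _ (fun _ _ => b) Hg) as [s [Hs Hsk]].
    apply (leR_meets_L_factor _ _ s); [|exact Hs].
    exists 0, b; split; [|exact b_in_L].
    rewrite Hsk, coord_block_in by lia; reflexivity.
  - intros Hle.
    destruct (leR_cases _ _ Hle) as [Heq | [s [[k [a [Hsk Ha]]] Heq]]].
    + assert (H0 : coord (block p b) 0 = coord (block p (mul b b)) 0) by (rewrite Heq; reflexivity).
      rewrite !coord_block_in in H0 by lia; injection H0 as H0.
      exact (b_notin_ML b b b_in_L (eq_sym H0)).
    + assert (Hk : coord (block p b) k = mul1 (coord (block p (mul b b)) k) (Some a))
        by (rewrite Heq, coord_tmul, Hsk; reflexivity).
      rewrite !coord_block in Hk; destruct (_ && _); [|discriminate].
      injection Hk as Hk.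
      exact (b_notin_ML (mul b b) a Ha (eq_sym Hk)).
Qed.

Lemma ltR_block_succ p : S p < n ->
  ltR tmul meets_L (block (S p) b) (block p (mul b b)).
Proof.
  intros Hp; split.
  - assert (Hg : forall j a, coord (block p (mul b b)) j = Some a ->
                 coord (block (S p) b) j = Some (mul a (rdiv a b))).
    { intros j a; rewrite mul_rdiv, !coord_block.
      destruct (Nat.leb_spec j p), (Nat.leb_spec j (S p)), (Nat.ltb_spec j n);
        simpl; (discriminate || reflexivity || lia). }
    destruct (tmul_factor _ _ (fun _ a => rdiv a b) Hg) as [s [Hs Hsk]].
    apply (leR_meets_L_factor _ _ s); [|exact Hs].
    exists (S p), b; split; [|exact b_in_L].
    rewrite Hsk, coord_block_out, coord_block_in by lia; reflexivity.
  - intros Hle; exact (not_supp_incl_block p b (mul b b) Hp (leR_supp_incl _ _ _ Hle)).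
Qed.

Definition full_chain : list ptuple := map (fun p => block p b) (seq 0 n).

(* [block 0 b > block 0 (b b) > block 1 b > block 1 (b b) > ...] *)
Definition meets_L_chain : list ptuple :=
  map (fun i => block (Nat.div2 i) (if Nat.even i then b else mul b b)) (seq 0 (2 * n)).

Lemma R_chain_full_chain : R_chain tmul (fun _ => True) full_chain.
Proof. apply R_chain_map_seq; intros i _ Hi; apply ltR_block_full; lia. Qed.

Lemma R_chain_meets_L_chain : R_chain tmul meets_L meets_L_chain.
Proof.
  apply R_chain_map_seq; intros i _ Hi.
  destruct (Nat.Even_or_Odd i) as [[p ->] | [p ->]].
  - rewrite Nat.div2_succ_double, Nat.even_succ, Nat.odd_even, Nat.div2_double, Nat.even_even.
    apply ltR_block_sq.
  - replace (S (2 * p + 1)) with (2 * S p) by lia.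
    rewrite Nat.div2_double, Nat.even_even, Nat.even_odd, Nat.add_1_r, Nat.div2_succ_double.
    apply ltR_block_succ; lia.
Qed.

Theorem ptuple_R_heights :
  left_ideal tmul meets_L /\
  R_height tmul (fun _ => True) n /\
  R_height tmul meets_L (2 * n).
Proof.
  split; [split | split; split].
  - exists (block 0 b); apply block_meets_L, b_in_L.
  - apply meets_L_left_ideal.
  - exists full_chain; split; [|split].
    + unfold full_chain; rewrite length_map, length_seq; reflexivity.
    + apply Forall_forall; trivial.
    + exact R_chain_full_chain.
  - intros [|x l] _ Hc; [simpl; lia | exact (R_chain_full_length l x Hc)].
  - exists meets_L_chain; split; [|split].
    + unfold meets_L_chain; rewrite length_map, length_seq; reflexivity.
    + apply Forall_forall; intros x Hx; apply in_map_iff in Hx as [i [<- _]].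
      apply block_meets_L; destruct (Nat.even i); [|apply L_left_ideal]; exact b_in_L.
    + exact R_chain_meets_L_chain.
  - intros [|x l] _ Hc; [simpl; lia | exact (R_chain_meets_L_length l x Hc)].
Qed.

End PartialTuples.

Definition unbounded_corange (f : nat -> nat) : Prop :=
  forall m, exists v, m <= v /\ forall t, f t <> v.

(* Maps act on the right: [bl_mul x y] is [x] followed by [y]. *)
Definition baer_levi : Type := {f : nat -> nat | Injective f /\ unbounded_corange f}.

Definition bl_fun (x : baer_levi) : nat -> nat := proj1_sig x.

Lemma bl_injective x : Injective (bl_fun x).
Proof. exact (proj1 (proj2_sig x)). Qed.

Lemma bl_corange x : unbounded_corange (bl_fun x).
Proof. exact (proj2 (proj2_sig x)). Qed.

Lemma bl_ext (x y : baer_levi) : (forall t, bl_fun x t = bl_fun y t) -> x = y.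
Proof.
  destruct x as [f Hf], y as [g Hg]; unfold bl_fun; simpl; intros H.
  assert (f = g) as <- by (apply functional_extensionality; exact H).
  f_equal; apply proof_irrelevance.
Qed.

Definition bl_mul (x y : baer_levi) : baer_levi.
Proof.
  exists (fun t => bl_fun y (bl_fun x t)); split.
  - intros t t' H; exact (bl_injective x _ _ (bl_injective y _ _ H)).
  - intros m; destruct (bl_corange y m) as [v [Hv Hy]]; exists v; split; auto.
Defined.

Lemma bl_fun_mul x y t : bl_fun (bl_mul x y) t = bl_fun y (bl_fun x t).
Proof. reflexivity. Qed.

Lemma bl_mul_assoc : associative_op bl_mul.
Proof. intros x y z; apply bl_ext; reflexivity. Qed.

Lemma increasing_lt (e : nat -> nat) :
  (forall k, e k < e (S k)) -> forall a c, a < c -> e a < e c.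
Proof.
  intros He a c Hac; induction Hac as [|c _ IH]; [apply He|].
  specialize (He c); lia.
Qed.

Lemma increasing_injective (e : nat -> nat) : (forall k, e k < e (S k)) -> Injective e.
Proof.
  intros He a c Heq.
  destruct (Nat.lt_total a c) as [H | [H | H]]; [| exact H |];
    apply (increasing_lt e He) in H; lia.
Qed.

Lemma increasing_ge (e : nat -> nat) : (forall k, e k < e (S k)) -> forall k, k <= e k.
Proof. intros He k; induction k as [|k IH]; [lia|]; specialize (He k); lia. Qed.

Fixpoint iter_above (next : nat -> nat) (k : nat) : nat :=
  match k with
  | 0 => next 0
  | S k' => next (S (iter_above next k'))
  end.

Lemma unbounded_enumeration (D : nat -> Prop) :
  (forall m, exists v, m <= v /\ D v) ->
  exists e : nat -> nat, (forall k, D (e k)) /\ (forall k, e k < e (S k)).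
Proof.
  intros HD.
  set (next m := proj1_sig (constructive_indefinite_description _ (HD m))).
  assert (Hnext : forall m, m <= next m /\ D (next m)).
  { intros m; exact (proj2_sig (constructive_indefinite_description _ (HD m))). }
  exists (iter_above next); split.
  - intros [|k]; apply Hnext.
  - intros k; simpl; pose proof (proj1 (Hnext (S (iter_above next k)))); lia.
Qed.

Section RightDivision.
Variables (x c : baer_levi) (e : nat -> nat).

(* The solution of [x z = c]: forced to be [c] after [x^-1] on the range of [x]; off that range
   it sends [u] to [e (2 u)], where [e] enumerates points outside the range of [c], so that the
   points [e (2 m + 1)] stay outside the range of the solution. *)
Definition bl_quot_fun (u : nat) : nat :=
  match excluded_middle_informative (exists t, bl_fun x t = u) with
  | left H => bl_fun c (proj1_sig (constructive_indefinite_description _ H))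
  | right _ => e (2 * u)
  end.

Lemma bl_quot_fun_cases u :
  (exists t, bl_fun x t = u /\ bl_quot_fun u = bl_fun c t) \/ bl_quot_fun u = e (2 * u).
Proof.
  unfold bl_quot_fun; destruct (excluded_middle_informative _) as [H|]; [left | right; reflexivity].
  destruct (constructive_indefinite_description _ H) as [t Ht].
  exists t; split; [exact Ht | reflexivity].
Qed.

Lemma bl_quot_fun_range t : bl_quot_fun (bl_fun x t) = bl_fun c t.
Proof.
  unfold bl_quot_fun; destruct (excluded_middle_informative _) as [H | H]; [|exfalso; eauto].
  destruct (constructive_indefinite_description _ H) as [t' Ht']; simpl.
  apply bl_injective in Ht'; subst t'; reflexivity.
Qed.

Hypothesis e_out : forall k t, bl_fun c t <> e k.
Hypothesis e_incr : forall k, e k < e (S k).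

Lemma bl_quot_fun_injective : Injective bl_quot_fun.
Proof.
  pose proof (increasing_injective e e_incr) as e_inj.
  intros u1 u2 Heq.
  destruct (bl_quot_fun_cases u1) as [[t1 [<- H1]] | H1],
    (bl_quot_fun_cases u2) as [[t2 [<- H2]] | H2]; rewrite H1, H2 in Heq.
  - apply bl_injective in Heq; subst; reflexivity.
  - exfalso; exact (e_out _ _ Heq).
  - exfalso; exact (e_out _ _ (eq_sym Heq)).
  - apply e_inj in Heq; lia.
Qed.

Lemma bl_quot_fun_corange : unbounded_corange bl_quot_fun.
Proof.
  pose proof (increasing_injective e e_incr) as e_inj.
  intros m; exists (e (2 * m + 1)); split; [pose proof (increasing_ge e e_incr (2 * m + 1)); lia|].
  intros u Hu; destruct (bl_quot_fun_cases u) as [[t [_ Ht]] | Ht]; rewrite Ht in Hu.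
  - exact (e_out _ _ Hu).
  - apply e_inj in Hu; lia.
Qed.

End RightDivision.

Lemma bl_right_simple (x c : baer_levi) : exists z, bl_mul x z = c.
Proof.
  destruct (unbounded_enumeration (fun v => forall t, bl_fun c t <> v) (bl_corange c))
    as [e [e_out e_incr]].
  exists (exist _ (bl_quot_fun x c e)
            (conj (bl_quot_fun_injective x c e e_out e_incr)
                  (bl_quot_fun_corange x c e e_out e_incr))).
  apply bl_ext; intros t; apply bl_quot_fun_range.
Qed.

Definition even_range (x : baer_levi) : Prop := forall t, Nat.Even (bl_fun x t).

Lemma even_range_left_ideal s x : even_range x -> even_range (bl_mul s x).
Proof. intros Hx t; apply Hx. Qed.

Definition bl_double : baer_levi.
Proof.
  exists (fun t => 2 * t); split.
  - intros t t' H; lia.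
  - intros m; exists (2 * m + 1); split; [lia | intros t; lia].
Defined.

Lemma even_range_double : even_range bl_double.
Proof. intros t; exists t; reflexivity. Qed.

(* With [v] outside the range of [s] and [a v = 2 k], [(s a) k = 2 k] would force [s k = v]. *)
Lemma bl_double_notin_mul_even_range s a : even_range a -> bl_mul s a <> bl_double.
Proof.
  intros Ha Heq.
  destruct (bl_corange s 0) as [v [_ Hv]]; destruct (Ha v) as [k Hk].
  assert (Hsk : bl_fun (bl_mul s a) k = bl_fun bl_double k) by (rewrite Heq; reflexivity).
  rewrite bl_fun_mul in Hsk; change (bl_fun bl_double k) with (2 * k) in Hsk; rewrite <- Hk in Hsk.
  exact (Hv k (bl_injective a _ _ Hsk)).
Qed.

Theorem corollary4p9 :
  forall n : nat, 0 < n ->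
  exists (S : Type) (mul : S -> S -> S),
    associative_op mul /\
    exists A : S -> Prop,
      left_ideal mul A /\
      R_height mul (fun _ => True) n /\
      R_height mul A (2 * n).
Proof.
  intros n Hn.
  exists (ptuple baer_levi n), (tmul baer_levi bl_mul n).
  split; [exact (tmul_assoc baer_levi bl_mul bl_mul_assoc n)|].
  exists (meets_L baer_levi n even_range).
  exact (ptuple_R_heights baer_levi bl_mul bl_mul_assoc n bl_right_simple even_range bl_double
           even_range_left_ideal even_range_double bl_double_notin_mul_even_range Hn).
Qed.
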